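(* Let $\beta>0$ and let $F$ be a fixed labelled graph on $v$ vertices. Then there exists $C>0$ such that the following holds for $1\leq t\leq 2^n$. If $V$ is a set of $n$ vertices, ${\mathcal F}_1,\dots,{\mathcal F}_t$ are families of labelled $v$-element subsets of $V$ with $|{\mathcal F}_i|\geq\beta n^v$ for each $i$, and $p=p(n)$ is such that $\Phi_F\geq Cn$, then asymptotically almost surely, for each $i\in[t]$ there is an embedding of $F$ in $G(n,p)$ on $V$ onto a set in ${\mathcal F}_i$ which respects the labellings.
   Context: $G(n,p)$ is the binomial random graph on $V$. For a graph $F$, $\Phi_F=\Phi_F(n,p):=\min\{n^{v_H}p^{e_H}:H\subseteq F,\ e_H>0\}$, where $v_H,e_H$ are the numbers of vertices and edges of $H$. An embedding respects labellings if the $j$-th vertex of $F$ is mapped to the $j$-th vertex of the labelled set. Asymptotically almost surely means with probability tending to $1$ as $n\to\infty$. *)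

From mathcomp Require Import all_boot all_order all_algebra.
From mathcomp Require Export reals.
Set Implicit Arguments. Unset Strict Implicit. Unset Printing Implicit Defensive.
Import Order.TTheory GRing.Theory Num.Theory.
Local Open Scope ring_scope.

Definition pairs (n : nat) : {set {set 'I_n}} := [set e : {set 'I_n} | #|e| == 2%N].

(* A graph on 'I_n is an edge set E \subset pairs n.
   Probability of an event A under the binomial random graph G(n,p). *)
Definition Gnp_prob {R : realType} (n : nat) (p : R)
  (A : pred {set {set 'I_n}}) : R :=
  \sum_(E : {set {set 'I_n}} | (E \subset pairs n) && A E)
     p ^+ #|E| * (1 - p) ^+ (#|pairs n| - #|E|).

Definition subgraph (v : nat) (EF : {set {set 'I_v}})
  (S : {set 'I_v}) (EH : {set {set 'I_v}}) : Prop :=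
  EH \subset EF /\ (forall e, e \in EH -> e \subset S).

(* Phi_F(n,p) >= c, where Phi_F = min { n^{v_H} p^{e_H} : H subgraph of F, e_H > 0 }
   (min over the empty family being +infinity). *)
Definition Phi_ge {R : realType} (v : nat) (EF : {set {set 'I_v}})
  (n : nat) (p : R) (c : R) : Prop :=
  forall (S : {set 'I_v}) (EH : {set {set 'I_v}}),
    subgraph EF S EH -> (0 < #|EH|)%N ->
    c <= n%:R ^+ #|S| * p ^+ #|EH|.

(* Event: for each i there is a labelled set f in Fam i (f j = image of
   the j-th vertex of F) onto which F embeds in the graph E, respecting labels. *)
Definition all_embed (v n t : nat) (EF : {set {set 'I_v}})
  (Fam : 'I_t -> {set {ffun 'I_v -> 'I_n}}) : pred {set {set 'I_n}} :=
  fun E => [forall i : 'I_t, [exists f in Fam i,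
              [forall e in EF, (f @: e) \in E]]].

From mathcomp Require Import all_boot all_order all_algebra.
From mathcomp Require Import reals sequences exp.
From mathcomp Require Import ring lra.
Set Implicit Arguments. Unset Strict Implicit. Unset Printing Implicit Defensive.
Import Order.TTheory GRing.Theory Num.Theory.

(* For one family K of labelled v-sets, let X_f be the edge set of the copy of F
   placed on f in K.  Janson's inequality, proved in the Boppana-Spencer form with the
   Harris inequality for the correlation step, bounds the probability that G(n,p)
   contains none of the X_f by exp (- (mu - Delta)).  Applied to a random subfamily
   keeping each f with probability q it gives exp (- (q mu - q^2 Delta)) for every
   q in [0,1].  From |K| >= beta n^v and Phi_F >= C n we get mu >= 12 n and
   12 n Delta <= mu^2 (two overlapping copies share a subgraph H of F, and Phi_F is
   applied to H), so a suitable q makes the exponent at least 3 n, and a union bound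
   over t <= 2^n families finishes the proof. *)

Lemma card_setT_finset (T : finType) : #|{set T}| = 2 ^ #|T|.
Proof. by rewrite -cardsT -card_powerset; apply: eq_card => A; rewrite !inE subsetT. Qed.

Lemma set_ind (T : finType) (P : {set T} -> Prop) : P set0 ->
  (forall (x : T) (U : {set T}), x \notin U -> P U -> P (x |: U)) -> forall U, P U.
Proof.
move=> P0 PS U; move: {2}#|U| (erefl #|U|) => k; elim: k U => [|k IH] U cardU.
  by move/eqP: cardU; rewrite cards_eq0 => /eqP->.
have [x xU] : exists x, x \in U by apply/set0Pn; rewrite -cards_eq0 cardU.
rewrite -(setD1K xU); apply: PS; first by rewrite !inE eqxx.
by apply: IH; move: cardU; rewrite (cardsD1 x U) xU add1n => -[].
Qed.

Lemma sum_exp_card_preimset (v n m : nat) (A : {set 'I_n}) : 0 < m -> #|A| <= m ->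
  \sum_(g : {ffun 'I_v -> 'I_n}) n ^ #|g @^-1: A| <= 2 ^ v * m ^ v * n ^ v.
Proof.
move=> m0 Am; rewrite (partition_big (fun g : {ffun 'I_v -> 'I_n} => g @^-1: A) predT) //=.
apply: (@leq_trans (\sum_(S : {set 'I_v}) m ^ v * n ^ v)); last first.
  by rewrite sum_nat_const card_setT_finset card_ord mulnA.
apply: leq_sum => S _.
pose F x : pred 'I_n := if x \in S then [pred y | y \in A] else predT.
apply: (@leq_trans (\sum_(g in family F) n ^ #|S|)).
  rewrite [leqRHS]big_mkcond [leqLHS]big_mkcond /= leq_sum // => g _.
  case: eqP => // gAS; suff -> : g \in family F by rewrite gAS.
  apply/familyP => x; rewrite /F; case: ifP => // xS.
  by move: xS; rewrite -gAS inE.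
rewrite sum_nat_const card_family foldrE big_map big_enum /=.
apply: (@leq_trans (\prod_(x : 'I_v) (if x \in S then m else n) * n ^ #|S|)).
  rewrite leq_mul2r leq_prod ?orbT // => x _; rewrite /F.
  by case: (x \in S); rewrite ?(leq_trans (eq_leq (eq_card _)) Am) // cardT size_enum_ord.
rewrite (bigID (mem S)) /= (eq_bigr (fun _ => m)) => [|x ->] //.
rewrite (eq_bigr (fun _ => n) (P := fun x => x \notin S)) => [|x /negbTE ->] //.
rewrite !prod_nat_const -mulnA -expnD addnC cardC card_ord leq_mul2r.
by rewrite leq_pexp2l ?orbT // (leq_trans (max_card _)) ?card_ord.
Qed.

Local Open Scope ring_scope.

(** * Binomial random subsets *)

Section BinomialRandomSubset.
Variables (R : realType) (T : finType) (p : R).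

Definition Ebin (U : {set T}) (h : {set T} -> R) : R :=
  \sum_(E : {set T} | E \subset U) p ^+ #|E| * (1 - p) ^+ (#|U| - #|E|) * h E.

Lemma Ebin_set0 (h : {set T} -> R) : Ebin set0 h = h set0.
Proof.
rewrite /Ebin (eq_bigl (pred1 set0)) ?big_pred1_eq => [|E]; last by rewrite subset0.
by rewrite cards0 subnn !expr0 !mul1r.
Qed.

Lemma Ebin_setU1 (x : T) (U : {set T}) (h : {set T} -> R) : x \notin U ->
  Ebin (x |: U) h = p * Ebin U (fun E => h (x |: E)) + (1 - p) * Ebin U h.
Proof.
move=> xU; have EDx (E : {set T}) : x \notin E -> E :\ x = E.
  by move=> xE; apply/setDidPl; rewrite disjoint_sym disjoints1.
rewrite /Ebin (bigID (fun E : {set T} => x \in E)) /= !mulr_sumr; congr (_ + _).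
- rewrite (reindex_onto (fun E => x |: E) (fun E => E :\ x)) /=; last first.
    by move=> E /andP[_ xE]; rewrite setD1K.
  apply: eq_big => [E|E EU].
    rewrite setU11 andbT; case EU: (E \subset U).
      have xE : x \notin E by apply: contra xU; apply: (subsetP EU).
      by rewrite setU1K // eqxx setUS.
    apply/negbTE/andP => -[s /eqP e]; move/negbT: EU => /negP; apply.
    apply/subsetP => y yE; have := subsetP s y; rewrite !inE yE orbT => /(_ isT).
    by case/orP => // /eqP yx; move: yE; rewrite -e yx !inE eqxx.
  have xE : x \notin E by move: EU => /andP[_ /eqP <-]; rewrite !inE eqxx.
  by rewrite !cardsU1 xU xE /= !add1n subSS exprS !mulrA.
- apply: eq_big => [E|E /andP[EU xE]].
    rewrite -subDset; apply/andP/idP => [[EU xE]|EU].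
      by rewrite -(EDx E xE).
    split; first exact: subset_trans (subD1set _ _) EU.
    by apply: contra xU; apply: (subsetP EU).
  rewrite -subDset EDx // in EU.
  rewrite cardsU1 xU add1n subSn ?subset_leq_card // exprS.
  by rewrite mulrA [p ^+ _ * _]mulrC !mulrA.
Qed.

Lemma eq_Ebin (U : {set T}) (h1 h2 : {set T} -> R) :
  (forall E : {set T}, E \subset U -> h1 E = h2 E) -> Ebin U h1 = Ebin U h2.
Proof. by move=> h12; apply: eq_bigr => E EU; rewrite h12. Qed.

Lemma Ebin_cst (U : {set T}) (c : R) : Ebin U (fun _ => c) = c.
Proof.
elim/set_ind: U => [|x U xU IH]; first by rewrite Ebin_set0.
by rewrite Ebin_setU1 // IH; ring.
Qed.

Lemma EbinZ (U : {set T}) (c : R) (h : {set T} -> R) :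
  Ebin U (fun E => c * h E) = c * Ebin U h.
Proof. by rewrite /Ebin mulr_sumr; apply: eq_bigr => E _; rewrite mulrCA. Qed.

Lemma Ebin_sum (U : {set T}) (I : Type) (r : seq I) (P : pred I) (F : I -> {set T} -> R) :
  Ebin U (fun E => \sum_(i <- r | P i) F i E) = \sum_(i <- r | P i) Ebin U (F i).
Proof. by rewrite /Ebin exchange_big; apply: eq_bigr => E _; rewrite mulr_sumr. Qed.

Lemma EbinB (U : {set T}) (h1 h2 : {set T} -> R) :
  Ebin U (fun E => h1 E - h2 E) = Ebin U h1 - Ebin U h2.
Proof.
rewrite /Ebin -sumrB; apply: eq_bigr => E _; by rewrite mulrBr.
Qed.

Lemma Ebin_indep (U X : {set T}) (B : {set T} -> R) : X \subset U ->
    (forall E, B (E :\: X) = B E) ->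
  Ebin U (fun E => (X \subset E)%:R * B E) = p ^+ #|X| * Ebin U B.
Proof.
elim/set_ind: U X B => [|x U xU IH] X B XU BX.
  by move: XU; rewrite subset0 => /eqP ->; rewrite !Ebin_set0 sub0set cards0 !mul1r.
rewrite !Ebin_setU1 //; case: (boolP (x \in X)) => xX.
- have BxE E : B (x |: E) = B E.
    rewrite -BX -[RHS]BX; congr B; apply/setP => y.
    by rewrite !inE; case: (y =P x) => // ->; rewrite xX.
  have BXx E : B (E :\: (X :\ x)) = B E.
    rewrite -BX -[RHS]BX; congr B; apply/setP => y.
    by rewrite !inE; case: (y =P x) => [->|]; rewrite ?xX //=; case: (y \in X).
  rewrite (eq_Ebin (h2 := fun E => (X :\ x \subset E)%:R * B E)); last first.
    by move=> E _; rewrite -subDset BxE.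
  rewrite IH ?subDset //.
  rewrite (eq_Ebin (h1 := fun E => (X \subset E)%:R * B E) (h2 := fun _ => 0)); last first.
    move=> E EU; case: (boolP (X \subset E)) => [XE|_]; last by rewrite mul0r.
    by move: xU; rewrite (subsetP EU) // (subsetP XE).
  rewrite Ebin_cst (eq_Ebin (h2 := B) (U := U)) => [|E _]; last by rewrite BxE.
  by rewrite (cardsD1 x X) xX add1n exprS; ring.
- have XxE E : (X \subset x |: E) = (X \subset E).
    rewrite -subDset; suff -> : X :\ x = X by [].
    by apply/setDidPl; rewrite disjoint_sym disjoints1.
  have BxX E : B (x |: (E :\: X)) = B (x |: E).
    rewrite -BX -[RHS]BX; congr B; apply/setP => y.
    by rewrite !inE; case: (y =P x) => [->|]; rewrite ?xX //=; case: (y \in X).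
  rewrite XxE in XU.
  rewrite (eq_Ebin (h2 := fun E => (X \subset E)%:R * B (x |: E))); last first.
    by move=> E _; rewrite XxE.
  by rewrite (IH X (fun E => B (x |: E))) // IH //; ring.
Qed.

Lemma Ebin_superset (U X : {set T}) : X \subset U -> Ebin U (fun E => (X \subset E)%:R) = p ^+ #|X|.
Proof.
move=> XU; rewrite (eq_Ebin (h2 := fun E => (X \subset E)%:R * 1)) => [|E _]; last by rewrite mulr1.
by rewrite Ebin_indep // Ebin_cst mulr1.
Qed.

Lemma Ebin_mem (U : {set T}) (i : T) : i \in U -> Ebin U (fun E => (i \in E)%:R) = p.
Proof.
move=> iU; rewrite -[RHS]expr1 -(cards1 i) -(Ebin_superset (U := U)) ?sub1set //.
by apply: eq_Ebin => E _; rewrite sub1set.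
Qed.

Lemma Ebin_mem2 (U : {set T}) (i j : T) : i \in U -> j \in U -> j != i ->
  Ebin U (fun E => (i \in E)%:R * (j \in E)%:R) = p ^+ 2.
Proof.
move=> iU jU ji; have -> : 2%N = #|[set i; j]| by rewrite cards2 eq_sym ji.
rewrite -(Ebin_superset (U := U)) ?subUset ?sub1set ?iU //.
by apply: eq_Ebin => E _; rewrite subUset !sub1set; case: (i \in E); rewrite ?mul1r ?mul0r.
Qed.

Hypothesis p01 : 0 <= p <= 1.

Lemma ler_Ebin (U : {set T}) (h1 h2 : {set T} -> R) :
  (forall E : {set T}, E \subset U -> h1 E <= h2 E) -> Ebin U h1 <= Ebin U h2.
Proof.
case/andP: p01 => p0 p1 h12; apply: ler_sum => E EU.
by rewrite ler_wpM2l ?h12 // mulr_ge0 ?exprn_ge0 ?subr_ge0.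
Qed.

Lemma Ebin_ge0 (U : {set T}) (h : {set T} -> R) :
  (forall E : {set T}, E \subset U -> 0 <= h E) -> 0 <= Ebin U h.
Proof. by move=> h0; rewrite -(Ebin_cst U 0); apply: ler_Ebin. Qed.

Lemma exists_Ebin_le (U : {set T}) (h : {set T} -> R) :
  exists2 S : {set T}, S \subset U & Ebin U h <= h S.
Proof.
have [S SU Smax] := @arg_maxP _ _ _ U (fun S : {set T} => S \subset U) h (subxx U).
by exists S => //; rewrite -[h S](Ebin_cst U); apply: ler_Ebin.
Qed.

Lemma Ebin_union_bound (J : finType) (U : {set T}) (A : J -> pred {set T}) :
  1 - \sum_j Ebin U (fun E => (A j E)%:R) <= Ebin U (fun E => [forall j, ~~ A j E]%:R).
Proof.
rewrite -[X in X - _](Ebin_cst U) -Ebin_sum -EbinB; apply: ler_Ebin => E _.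
have sum_ge0 (P : pred J) : 0 <= \sum_(j | P j) (A j E)%:R :> R.
  by apply: sumr_ge0 => j _; apply: ler0n.
case: (boolP [forall j, ~~ A j E]) => [_|/forallPn[j /negPn Aj]].
  by rewrite gerBl.
by rewrite (bigD1 j) //= Aj subr_le0 lerDl.
Qed.

Lemma Ebin_harris (U : {set T}) (h g : {set T} -> R) :
    (forall E F : {set T}, E \subset F -> h E <= h F) ->
    (forall E F : {set T}, E \subset F -> g F <= g E) ->
  Ebin U (fun E => h E * g E) <= Ebin U h * Ebin U g.
Proof.
elim/set_ind: U h g => [|x U xU IH] h g hup gdn; first by rewrite !Ebin_set0.
rewrite !Ebin_setU1 //.
have h01 : Ebin U h <= Ebin U (fun E => h (x |: E)).
  by apply: ler_Ebin => E _; apply: hup; apply: subsetUr.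
have g10 : Ebin U (fun E => g (x |: E)) <= Ebin U g.
  by apply: ler_Ebin => E _; apply: gdn; apply: subsetUr.
have IH1 := IH (fun E => h (x |: E)) (fun E => g (x |: E)).
have {}IH1 : Ebin U (fun E => h (x |: E) * g (x |: E)) <=
    Ebin U (fun E => h (x |: E)) * Ebin U (fun E => g (x |: E)).
  by apply: IH1 => E F EF; [apply: hup | apply: gdn]; apply: setUS.
have IH0 := IH h g hup gdn.
move: IH0 IH1 h01 g10.
set a1 := Ebin U (fun E => h (x |: E)); set a0 := Ebin U h.
set b1 := Ebin U (fun E => g (x |: E)); set b0 := Ebin U g.
set X1 := Ebin U (fun E => h (x |: E) * g (x |: E)).
set X0 := Ebin U (fun E => h E * g E) => IH0 IH1 h01 g10.
case/andP: p01 => p0 p1.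
have cov : 0 <= p * (1 - p) * ((a1 - a0) * (b0 - b1)) by rewrite !mulr_ge0 // subr_ge0.
have e1 : p * X1 <= p * (a1 * b1) by rewrite ler_wpM2l.
have e0 : (1 - p) * X0 <= (1 - p) * (a0 * b0) by rewrite ler_wpM2l // subr_ge0.
have -> : (p * a1 + (1 - p) * a0) * (p * b1 + (1 - p) * b0) =
  p * (a1 * b1) + (1 - p) * (a0 * b0) + p * (1 - p) * ((a1 - a0) * (b0 - b1)) by ring.
lra.
Qed.
End BinomialRandomSubset.

Arguments eq_Ebin {R T p U h1 h2}.

(** * Janson's inequality *)

Section Janson.
Variables (R : realType) (T I : finType) (p : R) (U : {set T}) (X : I -> {set T}) (K : {set I}).
Hypothesis p01 : 0 <= p <= 1.
Hypothesis XU : {in K, forall i, X i \subset U}.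

Definition avoids (J : {set I}) (E : {set T}) : bool := [forall j in J, ~~ (X j \subset E)].

Definition overlap (i j : I) : bool := ~~ [disjoint X i & X j].

(* The overlap sum runs over all of [K], not only over the indices added before [i]:
   this weakens the bound but lets the induction in [janson_ineq] keep [K] fixed. *)
Definition janson_gain (i : I) : R :=
  p ^+ #|X i| - \sum_(j in K | (j != i) && overlap i j) p ^+ #|X i :|: X j|.

Lemma avoidsS (J J' : {set I}) (E : {set T}) : J \subset J' -> avoids J' E -> avoids J E.
Proof.
move=> JJ' /forall_inP avJ'; apply/forall_inP => j jJ; exact/avJ'/(subsetP JJ').
Qed.

Lemma avoidsU (J J' : {set I}) (E : {set T}) :
  avoids (J :|: J') E = avoids J E && avoids J' E.
Proof.
apply/forall_inP/andP => [avJ|[/forall_inP avJ /forall_inP avJ'] j].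
  by split; apply/forall_inP => j jJ; apply: avJ; rewrite inE jJ ?orbT.
by rewrite inE => /orP[/avJ|/avJ'].
Qed.

Lemma avoids_set1 (i : I) (E : {set T}) : avoids [set i] E = ~~ (X i \subset E).
Proof.
by apply/forall_inP/idP => [/(_ i (set11 i))|nXi j /set1P ->].
Qed.

Lemma avoids_anti (J : {set I}) (E F : {set T}) : E \subset F -> avoids J F -> avoids J E.
Proof.
move=> EF /forall_inP avF; apply/forall_inP => j /avF.
by apply: contra => /subset_trans; apply.
Qed.

Lemma avoids_setDl (i : I) (J : {set I}) (E : {set T}) :
  {in J, forall j, ~~ overlap i j} -> avoids J (E :\: X i) = avoids J E.
Proof.
move=> disjJ; apply/forall_inP/forall_inP => avJ j jJ; last first.
  by apply: contra (avJ j jJ) => /subset_trans; apply; apply: subsetDl.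
apply: contra (avJ j jJ) => XjE; rewrite subsetD XjE disjoint_sym.
by have := disjJ j jJ; rewrite negbK.
Qed.

(* Boppana-Spencer step: avoiding the X j disjoint from X i is independent of
   [X i \subset E], and each overlapping j costs at most p ^+ #|X i :|: X j| by the
   Harris inequality. *)
Lemma Ebin_hit_avoids_ge (i : I) (J : {set I}) : i \in K -> J \subset K ->
  Ebin p U (fun E => (avoids [set j in J | ~~ overlap i j] E)%:R) *
    (p ^+ #|X i| - \sum_(j in J | overlap i j) p ^+ #|X i :|: X j|)
  <= Ebin p U (fun E => (X i \subset E)%:R * (avoids J E)%:R).
Proof.
move=> iK JK; set Jb := [set j in J | ~~ overlap i j].
set Pb := Ebin p U (fun E => (avoids Jb E)%:R).
have hit_avoids_Jb : Ebin p U (fun E => (X i \subset E)%:R * (avoids Jb E)%:R) = p ^+ #|X i| * Pb.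
  by rewrite Ebin_indep ?XU // => E; rewrite avoids_setDl // => j; rewrite inE => /andP[].
have hit2_avoids_Jb j : j \in J ->
    Ebin p U (fun E : {set T} => (X i :|: X j \subset E)%:R * (avoids Jb E)%:R)
      <= p ^+ #|X i :|: X j| * Pb.
  move=> jJ; have XjU : X j \subset U by apply/XU/(subsetP JK).
  have XijU : X i :|: X j \subset U by rewrite subUset XjU XU.
  rewrite -(Ebin_superset p XijU).
  apply: Ebin_harris => // E F EF.
    by rewrite ler_nat; case: (boolP (_ \subset E)) => // /subset_trans/(_ EF) ->.
  by rewrite ler_nat; case: (boolP (avoids Jb F)) => // /(avoids_anti EF) ->.
have pointwise (E : {set T}) : (X i \subset E)%:R * (avoids Jb E)%:R -
     \sum_(j in J | overlap i j) (X i :|: X j \subset E)%:R * (avoids Jb E)%:R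
   <= (X i \subset E)%:R * (avoids J E)%:R :> R.
  have -> : avoids J E = avoids Jb E && avoids [set j in J | overlap i j] E.
    rewrite -avoidsU; congr avoids; apply/setP => k.
    by rewrite !inE; case: (k \in J); case: (overlap i k).
  have sum_ge0 (P : pred I) (b : I -> bool) (c : bool) :
      0 <= \sum_(k in J | P k) (b k)%:R * c%:R :> R.
    by apply: sumr_ge0 => k _; rewrite mulr_ge0 ?ler0n.
  case: (boolP (X i \subset E)) => XiE; last by rewrite !mul0r sub0r oppr_le0.
  case: (boolP (avoids Jb E)) => avJb; last first.
    by rewrite mulr0 big1 ?subr0 ?mulr0 // => k _; rewrite mulr0.
  case: (boolP (avoids _ E)) => [_|/forall_inPn [j]]; first by rewrite lerBlDr lerDl.
  rewrite inE negbK => /andP[jJ ovj] XjE; rewrite mulr0 subr_le0 (bigD1 j) ?jJ //=.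
  rewrite subUset XiE XjE !mulr1 lerDl; apply: sumr_ge0 => k _; by rewrite mulr1 ler0n.
apply: (le_trans _ (ler_Ebin p01 (fun E _ => pointwise E))); rewrite EbinB Ebin_sum hit_avoids_Jb.
rewrite mulrBr [Pb * _]mulrC lerB // mulr_sumr; apply: ler_sum => j /andP[jJ _].
by rewrite mulrC; apply: hit2_avoids_Jb.
Qed.

Lemma Ebin_avoids_setU1 (i : I) (J : {set I}) : i \in K -> i \notin J -> J \subset K ->
  Ebin p U (fun E => (avoids (i |: J) E)%:R) <=
    Ebin p U (fun E => (avoids J E)%:R) * (1 - janson_gain i).
Proof.
move=> iK iJ JK; set P := Ebin p U (fun E => (avoids J E)%:R).
set Q := Ebin p U (fun E => (X i \subset E)%:R * (avoids J E)%:R).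
set r := p ^+ #|X i| - \sum_(j in J | overlap i j) p ^+ #|X i :|: X j|.
have JbJ : [set j in J | ~~ overlap i j] \subset J by apply/subsetP => j; rewrite inE => /andP[].
have P_le : P <= Ebin p U (fun E => (avoids [set j in J | ~~ overlap i j] E)%:R).
  apply: ler_Ebin => // E _; rewrite ler_nat.
  by case: (boolP (avoids J E)) => // /(avoidsS JbJ) ->.
have P0 : 0 <= P by apply: Ebin_ge0 => // E _; apply: ler0n.
have Q0 : 0 <= Q by apply: Ebin_ge0 => // E _; rewrite mulr_ge0 ?ler0n.
have gain_le : janson_gain i <= r.
  rewrite lerB // [X in _ <= X]big_mkcond [X in X <= _]big_mkcond /=.
  apply: ler_sum => j _; case: (boolP (j \in J)) => jJ; last first.
    by case: ifP => // _; rewrite exprn_ge0 //; case/andP: p01.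
  by rewrite (subsetP JK) //= (memPn iJ).
have -> : Ebin p U (fun E => (avoids (i |: J) E)%:R) = P - Q.
  rewrite -EbinB; apply: eq_Ebin => E _; rewrite avoidsU avoids_set1.
  by case: (X i \subset E); case: (avoids J E); rewrite /= ?mul1r ?mul0r ?subr0 ?subrr.
rewrite mulrBr mulr1 lerB //; case: (lerP 0 r) => r0.
  apply: le_trans (ler_wpM2l P0 gain_le) _.
  by apply: le_trans _ (Ebin_hit_avoids_ge iK JK); rewrite ler_wpM2r.
by apply: le_trans _ Q0; rewrite mulr_ge0_le0 // ltW // (le_lt_trans gain_le).
Qed.

Theorem janson_ineq (J : {set I}) : J \subset K ->
  Ebin p U (fun E => (avoids J E)%:R) <= expR (- \sum_(i in J) janson_gain i).
Proof.
elim/set_ind: J => [|i J iJ IH] JK.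
  rewrite big_set0 oppr0 expR0 (eq_Ebin (h2 := fun _ => 1)) ?Ebin_cst // => E _.
  suff -> : avoids set0 E by []; by apply/forall_inP => j; rewrite inE.
have iK : i \in K by apply: (subsetP JK); rewrite setU11.
have {}JK : J \subset K by apply: subset_trans JK; apply: subsetUr.
apply: le_trans (Ebin_avoids_setU1 iK iJ JK) _.
have P0 : 0 <= Ebin p U (fun E => (avoids J E)%:R).
  by apply: Ebin_ge0 => // E _; apply: ler0n.
have gain_exp : 1 - janson_gain i <= expR (- janson_gain i).
  by have := expR_ge1Dx (- janson_gain i); lra.
apply: le_trans (ler_wpM2l P0 gain_exp) _.
rewrite big_setU1 //= (opprD (janson_gain i)) expRD [expR (- janson_gain i) * _]mulrC.
by rewrite ler_wpM2r ?expR_ge0 ?IH.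
Qed.
End Janson.

(** * Random thinning *)

Lemma sum_indicator_subset (R : pzSemiRingType) (I : finType) (A S : {set I}) (P : pred I)
    (F : I -> R) :
  S \subset A -> \sum_(i in A | P i) F i * (i \in S)%:R = \sum_(i in S | P i) F i.
Proof.
move=> SA; rewrite big_mkcond [RHS]big_mkcond; apply: eq_bigr => i _.
case: (boolP (i \in S)) => [/(subsetP SA) -> | _]; first by rewrite mulr1.
by rewrite mulr0; case: (_ && _).
Qed.

Lemma sum_indicator_subsetT (R : pzSemiRingType) (I : finType) (A S : {set I}) (F : I -> R) :
  S \subset A -> \sum_(i in A) F i * (i \in S)%:R = \sum_(i in S) F i.
Proof.
move=> SA; rewrite big_mkcond [RHS]big_mkcond; apply: eq_bigr => i _.
case: (boolP (i \in S)) => [/(subsetP SA) -> | _]; first by rewrite mulr1.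
by rewrite mulr0; case: (_ \in _).
Qed.

Section Thinning.
Variables (R : realType) (I : finType) (K0 : {set I}) (q : R).
Hypothesis q01 : 0 <= q <= 1.

Lemma exists_subset_thinning (a : I -> R) (b : I -> I -> R) (c : rel I) :
  exists2 S : {set I}, S \subset K0 &
    q * \sum_(i in K0) a i - q ^+ 2 * \sum_(i in K0) \sum_(j in K0 | (j != i) && c i j) b i j
    <= \sum_(i in S) a i - \sum_(i in S) \sum_(j in S | (j != i) && c i j) b i j.
Proof.
pose f (S : {set I}) := \sum_(i in S) a i - \sum_(i in S) \sum_(j in S | (j != i) && c i j) b i j.
have <- : Ebin q K0 f =
    q * \sum_(i in K0) a i - q ^+ 2 * \sum_(i in K0) \sum_(j in K0 | (j != i) && c i j) b i j.
  rewrite (eq_Ebin (h2 := fun S => \sum_(i in K0) a i * (i \in S)%:R -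
     \sum_(i in K0) \sum_(j in K0 | (j != i) && c i j) b i j * ((i \in S)%:R * (j \in S)%:R))).
    rewrite EbinB !Ebin_sum !mulr_sumr; congr (_ - _); apply: eq_bigr => i iK0.
      by rewrite EbinZ Ebin_mem // mulrC.
    rewrite Ebin_sum mulr_sumr; apply: eq_bigr => j /andP[jK0 /andP[ji _]].
    by rewrite EbinZ Ebin_mem2 // mulrC.
  move=> T TK0; rewrite /f -(sum_indicator_subsetT _ TK0); congr (_ - _).
  rewrite -(sum_indicator_subsetT _ TK0); apply: eq_bigr => i iK0.
  rewrite -(sum_indicator_subset _ _ TK0) mulr_suml; apply: eq_bigr => j _.
  by rewrite -mulrA [(j \in T)%:R * _]mulrC.
exact: exists_Ebin_le.
Qed.
End Thinning.

Lemma Ebin_avoids_le_thinned (R : realType) (T I : finType) (p q : R) (U : {set T})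
    (X : I -> {set T}) (K0 : {set I}) :
  0 <= p <= 1 -> 0 <= q <= 1 -> {in K0, forall i, X i \subset U} ->
  Ebin p U (fun E => (avoids X K0 E)%:R) <=
  expR (- (q * \sum_(i in K0) p ^+ #|X i| -
           q ^+ 2 * \sum_(i in K0) \sum_(j in K0 | (j != i) && overlap X i j) p ^+ #|X i :|: X j|)).
Proof.
move=> p01 q01 XU.
have [S SK0 thin] := exists_subset_thinning K0 q01 (fun i => p ^+ #|X i|)
  (fun i j => p ^+ #|X i :|: X j|) (overlap X).
have XSU : {in S, forall i, X i \subset U} by move=> i /(subsetP SK0)/XU.
apply: (le_trans (y := Ebin p U (fun E => (avoids X S E)%:R))).
  apply: ler_Ebin => // E _; rewrite ler_nat.
  by case: (boolP (avoids X K0 E)) => // /(avoidsS SK0) ->.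
apply: le_trans (janson_ineq p01 XSU (subxx S)) _.
by rewrite ler_expR lerN2 /janson_gain sumrB.
Qed.

Lemma exists_quadratic_ge (R : realFieldType) (a mu D : R) :
  0 <= D -> 0 <= a -> 2 * a <= mu -> 4 * a * D <= mu ^+ 2 ->
  exists2 q, 0 <= q <= 1 & a <= q * mu - q ^+ 2 * D.
Proof.
move=> D0 a0 amu aD; case: (lerP (2 * D) mu) => muD.
  by exists 1; [rewrite ler01 lexx | rewrite expr1n !mul1r; lra].
have Dpos : 0 < D by lra.
exists (mu / (2 * D)).
  by rewrite divr_ge0 ?ler_pdivrMr ?mul1r; lra.
rewrite (_ : _ - _ = mu ^+ 2 / (4 * D)); last by field; lra.
by rewrite ler_pdivlMr; lra.
Qed.

(* Applied with N = n, m = #|K0|, P = p ^+ #|EF|, Y = n ^ v, K = 2 ^ v * v ^ v and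
   D the overlap sum of the copies. *)
Lemma exists_thinning_exponent_ge (R : realFieldType) (beta C K N m P Y D : R) :
    0 < beta -> 1 <= K -> 0 <= N -> 0 <= P -> 0 <= Y -> 0 <= D ->
    C * beta = 12 * K -> beta * Y <= m -> C * N <= Y * P -> C * N * D <= m * K * Y * P ^+ 2 ->
  exists2 q, 0 <= q <= 1 & 3 * N <= q * (m * P) - q ^+ 2 * D.
Proof.
move=> beta0 K1 N0 P0 Y0 D0 CB Ym CN CD.
have m0 : 0 <= m by apply: le_trans _ Ym; rewrite mulr_ge0 // ltW.
have KN : 12 * K * N = beta * (C * N) by rewrite mulrA [beta * C]mulrC CB.
apply: exists_quadratic_ge => //; first by rewrite mulr_ge0.
  suff : 12 * N <= m * P by lra.
  have : beta * (C * N) <= beta * Y * P by rewrite -mulrA ler_pM2l.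
  have : beta * Y * P <= m * P by rewrite ler_wpM2r.
  have : 12 * N <= 12 * K * N by rewrite ler_wpM2r // ler_peMr.
  lra.
have Kpos : 0 < K by apply: lt_le_trans ltr01 K1.
have X0 : 0 <= m * K * P ^+ 2 by rewrite !mulr_ge0 ?exprn_ge0 // ltW.
have h1 : beta * (C * N * D) <= beta * (Y * (m * K * P ^+ 2)).
  by rewrite ler_pM2l // (_ : Y * _ = m * K * Y * P ^+ 2) //; ring.
have h2 : beta * (Y * (m * K * P ^+ 2)) <= m * (m * K * P ^+ 2).
  by rewrite mulrA ler_wpM2r.
rewrite -(ler_pM2l Kpos) (_ : K * (4 * (3 * N) * D) = beta * (C * N * D)); last first.
  by rewrite !mulrA [beta * C]mulrC CB; ring.
rewrite (_ : K * (m * P) ^+ 2 = m * (m * K * P ^+ 2)); last by ring.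
exact: le_trans h1 h2.
Qed.

(** * Copies of F in G(n,p) *)

Lemma Gnp_probE (R : realType) (n : nat) (p : R) (A : pred {set {set 'I_n}}) :
  Gnp_prob p A = Ebin p (pairs n) (fun E => (A E)%:R).
Proof.
rewrite /Gnp_prob /Ebin big_mkcondr; apply: eq_bigr => E _.
by case: (A E); rewrite ?mulr1 ?mulr0.
Qed.

Section Copies.
Variables (v : nat) (EF : {set {set 'I_v}}).
Hypothesis EF2 : forall e, e \in EF -> #|e| = 2%N.

Definition copy_edges (n : nat) (f : {ffun 'I_v -> 'I_n}) : {set {set 'I_n}} :=
  [set f @: e | e : {set 'I_v} in EF].

Lemma copy_edges_subset n (f : {ffun 'I_v -> 'I_n}) (E : {set {set 'I_n}}) :
  (copy_edges f \subset E) = [forall e in EF, f @: e \in E].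
Proof.
apply/subsetP/forall_inP => [sub e eF|embed _ /imsetP[e eF ->]]; last exact: embed.
by apply: sub; apply: imset_f.
Qed.

Lemma copy_edges_pairs n (f : {ffun 'I_v -> 'I_n}) : injective f -> copy_edges f \subset pairs n.
Proof.
by move=> f_inj; apply/subsetP => _ /imsetP[e eF ->]; rewrite inE card_imset // EF2.
Qed.

Lemma card_copy_edges n (f : {ffun 'I_v -> 'I_n}) : injective f -> #|copy_edges f| = #|EF|.
Proof. by move=> f_inj; rewrite card_imset //; apply: imset_inj. Qed.

Variables (R : realType) (n : nat) (p C : R).
Hypothesis p0 : 0 <= p.
Hypothesis PhiF : Phi_ge EF n p (C * n%:R).

(* The edges of F that g maps onto edges of the copy of f form a subgraph H of F whose
   vertices g maps into the image of f, and Phi_F applied to H pays for the shared edges. *)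
Lemma overlap_copy_weight_le (f g : {ffun 'I_v -> 'I_n}) :
    injective f -> injective g -> overlap (@copy_edges n) f g ->
  C * n%:R * p ^+ #|copy_edges f :|: copy_edges g| <=
    (n ^ #|g @^-1: (f @: [set: 'I_v])|)%:R * p ^+ (#|EF| + #|EF|).
Proof.
move=> f_inj g_inj ov_fg; set S := g @^-1: _.
set EH := [set e in EF | g @: e \in copy_edges f].
have subH : subgraph EF S EH.
  split=> [|e]; first by apply/subsetP => e; rewrite inE => /andP[].
  rewrite inE => /andP[eF /imsetP[e' e'F ge]]; apply/subsetP => x xe.
  have : g x \in g @: e by apply: imset_f.
  by rewrite ge inE => /imsetP[y _ ->]; apply: imset_f; rewrite inE.
have capE : copy_edges f :&: copy_edges g = (fun e : {set 'I_v} => g @: e) @: EH.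
  apply/setP => A; rewrite inE; apply/andP/imsetP => [[Af /imsetP[e eF Ae]]|[e]].
    by exists e => //; rewrite inE eF -Ae Af.
  by rewrite inE => /andP[eF gef] ->; split => //; apply: imset_f.
have cardEH : #|EH| = #|copy_edges f :&: copy_edges g|.
  by rewrite capE card_imset //; apply: imset_inj.
have EH0 : (0 < #|EH|)%N by rewrite cardEH card_gt0 setI_eq0.
have cardU : (#|EH| + #|copy_edges f :|: copy_edges g| = #|EF| + #|EF|)%N.
  by rewrite cardEH addnC cardsUI !card_copy_edges.
rewrite natrX -cardU exprD mulrA ler_wpM2r ?exprn_ge0 //.
exact: PhiF subH EH0.
Qed.

Lemma sum_overlap_copies_le (f : {ffun 'I_v -> 'I_n}) (K0 : {set {ffun 'I_v -> 'I_n}}) :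
    (0 < v)%N -> injective f -> {in K0, forall g : {ffun 'I_v -> 'I_n}, injective g} ->
  C * n%:R * \sum_(g in K0 | (g != f) && overlap (@copy_edges n) f g)
      p ^+ #|copy_edges f :|: copy_edges g|
    <= (2 ^ v * v ^ v * n ^ v)%:R * p ^+ (#|EF| + #|EF|).
Proof.
move=> v0 f_inj K0_inj; set w := p ^+ (#|EF| + #|EF|).
have w0 : 0 <= w by apply: exprn_ge0.
pose weight (g : {ffun 'I_v -> 'I_n}) := (n ^ #|g @^-1: (f @: [set: 'I_v])|)%:R * w.
apply: (le_trans (y := \sum_(g in K0 | (g != f) && overlap (@copy_edges n) f g) weight g)).
  rewrite mulr_sumr; apply: ler_sum => g /andP[gK0 /andP[_ ov_fg]].
  exact: overlap_copy_weight_le (K0_inj g gK0) ov_fg.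
apply: (le_trans (y := \sum_(g : {ffun 'I_v -> 'I_n}) weight g)).
  by rewrite [leLHS]big_mkcond /=; apply: ler_sum => g _; case: ifP => // _; rewrite mulr_ge0.
rewrite -mulr_suml -natr_sum ler_wpM2r // ler_nat sum_exp_card_preimset //.
by rewrite (leq_trans (leq_imset_card _ _)) // cardsT card_ord.
Qed.
End Copies.

Section FamilyBound.
Variables (R : realType) (v : nat) (EF : {set {set 'I_v}}).
Hypothesis EF2 : forall e, e \in EF -> #|e| = 2%N.
Variables (beta : R) (n : nat) (p : R) (K0 : {set {ffun 'I_v -> 'I_n}}).
Hypotheses (n0 : (0 < n)%N) (beta0 : 0 < beta) (p01 : 0 <= p <= 1).
Hypothesis K0_inj : {in K0, forall f : {ffun 'I_v -> 'I_n}, injective f}.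
Hypothesis K0_large : beta * n%:R ^+ v <= #|K0|%:R.

(* 2 ^ v * v ^ v bounds the overlap counting of [sum_exp_card_preimset], and 12 = 4 * 3
   makes the thinned Janson exponent at least 3 n. *)
Definition embedding_const : R := 12 * (2 ^ v * v ^ v)%:R / beta.

Hypothesis PhiF : Phi_ge EF n p (embedding_const * n%:R).

Lemma Ebin_avoids_copies_le :
  Ebin p (pairs n) (fun E => (avoids (@copy_edges v EF n) K0 E)%:R) <= expR (- (3 * n%:R)).
Proof.
have p0 : 0 <= p by case/andP: p01.
have [EF0|/set0Pn[e0 e0F]] := eqVneq EF set0.
  rewrite (eq_Ebin (h2 := fun _ => 0)) ?Ebin_cst ?expR_ge0 // => E _.
  have /set0Pn[f fK0] : K0 != set0.
    by rewrite -card_gt0 -(ltr0n R) (lt_le_trans _ K0_large) // mulr_gt0 ?exprn_gt0 ?ltr0n.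
  suff -> : avoids (@copy_edges v EF n) K0 E = false by [].
  apply/negbTE/forall_inPn; exists f; rewrite // negbK copy_edges_subset.
  by apply/forall_inP => e; rewrite EF0 inE.
have v0 : (0 < v)%N by rewrite -(card_ord v) (leq_trans _ (max_card e0)) ?EF2.
set X := @copy_edges v EF n; set e := #|EF|; set Kn := (2 ^ v * v ^ v)%N.
set mu := \sum_(f in K0) p ^+ #|X f|.
set D := \sum_(f in K0) \sum_(g in K0 | (g != f) && overlap X f g) p ^+ #|X f :|: X g|.
have muE : mu = #|K0|%:R * p ^+ e.
  rewrite /mu (eq_bigr (fun _ => p ^+ e)) ?sumr_const ?mulr_natl // => f.
  by move/K0_inj/card_copy_edges ->.
have D0 : 0 <= D by do 2!apply: sumr_ge0 => ? _; apply: exprn_ge0.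
have DKn : embedding_const * n%:R * D <= #|K0|%:R * Kn%:R * n%:R ^+ v * (p ^+ e) ^+ 2.
  rewrite /D mulr_sumr; apply: le_trans (ler_sum _ (fun f (fK0 : f \in K0) =>
    sum_overlap_copies_le p0 PhiF v0 (K0_inj fK0) K0_inj)) _.
  by rewrite sumr_const -[leLHS]mulr_natl natrM natrX exprD -expr2 !mulrA.
have PhiK : embedding_const * n%:R <= n%:R ^+ v * p ^+ e.
  have := PhiF (S := [set: 'I_v]) (EH := EF); rewrite cardsT card_ord; apply; last first.
    by rewrite card_gt0; apply/set0Pn; exists e0.
  by split => // ? _; apply: subsetT.
have Kn1 : 1 <= Kn%:R :> R by rewrite ler1n muln_gt0 !expn_gt0 v0.
have CB : embedding_const * beta = 12 * Kn%:R.
  by rewrite /embedding_const mulrAC -mulrA divff ?mulr1 // gt_eqF.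
have [q q01] := exists_thinning_exponent_ge beta0 Kn1 (ler0n R n) (exprn_ge0 e p0)
  (exprn_ge0 v (ler0n R n)) D0 CB K0_large PhiK DKn.
rewrite -muE => q_ge.
have XU : {in K0, forall f, X f \subset pairs n} by move=> f /K0_inj/copy_edges_pairs; apply.
apply: le_trans (Ebin_avoids_le_thinned p01 q01 XU) _.
by rewrite ler_expR lerN2.
Qed.
End FamilyBound.

Lemma natr_mul_expR_le (R : realType) (eps : R) (n t : nat) :
  0 < eps -> eps^-1 < n%:R -> (t <= 2 ^ n)%N -> t%:R * expR (- (3 * n%:R)) <= eps.
Proof.
move=> eps0 neps tn; rewrite expRN ler_pdivrMr ?expR_gt0 //.
set a : R := (2 ^ n)%:R.
have e3 : 4 <= expR 3 :> R by have := expR_ge1Dx (3 : R); lra.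
have pow4 : eps * (a * a) <= eps * expR (3 * n%:R).
  rewrite ler_pM2l // /a -natrM -expnMn natrX (mulrC 3) expRM_natl.
  by apply: lerXn2r => //; rewrite ?nnegrE ?expR_ge0.
have eps_a : 1 <= eps * a.
  rewrite -div1r ltr_pdivrMr // mulrC in neps; apply: ltW (lt_le_trans neps _).
  by rewrite ler_pM2l // ler_nat ltnW // ltn_expl.
have : a <= eps * a * a by rewrite -[leLHS]mul1r ler_wpM2r ?ler0n.
have : t%:R <= a by rewrite ler_nat.
lra.
Qed.

Lemma all_embed_avoids (v n t : nat) (EF : {set {set 'I_v}})
    (Fam : 'I_t -> {set {ffun 'I_v -> 'I_n}}) (E : {set {set 'I_n}}) :
  all_embed EF Fam E = [forall i, ~~ avoids (@copy_edges v EF n) (Fam i) E].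
Proof.
apply: eq_forallb => i; apply/exists_inP/forall_inPn => -[f fi embed]; exists f => //.
  by rewrite negbK copy_edges_subset.
by move: embed; rewrite negbK copy_edges_subset.
Qed.

Theorem corollary2p9 (R : realType) (beta : R) (v : nat)
  (EF : {set {set 'I_v}}) :
  0 < beta ->
  (forall e, e \in EF -> #|e| = 2%N) ->
  exists C : R, 0 < C /\
    forall eps : R, 0 < eps -> exists N : nat, forall n : nat, (N <= n)%N ->
    forall (t : nat) (Fam : 'I_t -> {set {ffun 'I_v -> 'I_n}}) (p : R),
      (1 <= t <= 2 ^ n)%N ->
      0 <= p <= 1 ->
      (forall i f, f \in Fam i -> injective f) ->
      (forall i, beta * n%:R ^+ v <= #|Fam i|%:R) ->
      Phi_ge EF n p (C * n%:R) ->
      1 - eps <= @Gnp_prob R n p (all_embed EF Fam).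
Proof.
move=> beta0 EF2; exists (embedding_const v beta); split.
  by rewrite divr_gt0 // mulr_gt0 // ltr0n muln_gt0 !expn_gt0 /= lt0n orNb.
move=> eps eps0; exists (Num.truncn eps^-1).+1.
move=> n Nn t Fam p /andP[_ tn] p01 Fam_inj Fam_large PhiF.
have n0 : (0 < n)%N := leq_trans (ltn0Sn _) Nn.
have neps : eps^-1 < n%:R by apply: lt_le_trans (truncnS_gt _) _; rewrite ler_nat.
rewrite Gnp_probE (eq_Ebin (h2 := fun E =>
  [forall i, ~~ avoids (@copy_edges v EF n) (Fam i) E]%:R)) => [|E _]; last first.
  by rewrite all_embed_avoids.
apply: le_trans _ (Ebin_union_bound p01 _ _); rewrite lerB //.
apply: le_trans (natr_mul_expR_le eps0 neps tn).
rewrite mulr_natl -[X in _ *+ X](card_ord t) -sumr_const; apply: ler_sum => i _ /=.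
by apply: (Ebin_avoids_copies_le EF2 n0 beta0 p01) => // f; apply: Fam_inj.
Qed.
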